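(* Let $\mathbb{X}$ be a real Banach space and let $f\in \mathbb{X}^{**}$ be weak$^*$ continuous. Let $\mathbb{Y}$ be a linear subspace of $\mathbb{X}^{**}$ such that each member of $\mathbb{Y}$ is weak$^*$ continuous and $f\notin \mathbb{Y}$. Let $g_0\in \mathbb{Y}$. Then $g_0$ is a best approximation to $f$ out of $\mathbb{Y}$ if and only if for every finite-dimensional subspace $\mathbb{Z}$ of $\mathbb{Y}$ containing $g_0$, $$\Big(\bigcap_{g\in \mathbb{Z}}\mathcal{N}(g)\Big)\cap M_{f-g_0} \neq \emptyset.$$
   Context: A functional in $\mathbb{X}^{**}$ is weak$^*$ continuous (as a functional on $\mathbb{X}^*$) iff it equals $\psi(x)$ for some $x\in\mathbb{X}$, $\psi$ the canonical embedding. For $h\in\mathbb{X}^{**}$: $\mathcal{N}(h)=\{x^*\in\mathbb{X}^*:h(x^* )=0\}$ and $M_h=\{x^*\in S_{\mathbb{X}^*}: |h(x^* )|=\|h\|\}$, where $S_{\mathbb{X}^*}$ is the unit sphere of $\mathbb{X}^*$. An element $g_0\in\mathbb{Y}$ is a best approximation to $f$ out of $\mathbb{Y}$ if $\|f-g_0\|=\inf\{\|f-g\|: g\in\mathbb{Y}\}$. *)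

From HB Require Import structures.
From mathcomp Require Import all_boot all_order all_algebra.
From mathcomp Require Import all_classical all_reals all_analysis.
Set Implicit Arguments. Unset Strict Implicit. Unset Printing Implicit Defensive.
Import Order.TTheory GRing.Theory Num.Theory.
Import numFieldNormedType.Exports.
Local Open Scope classical_set_scope.
Local Open Scope ring_scope.

Section Bidual.
Variables (R : realType) (X : normedModType R).

Definition is_dual (phi : X -> R) : Prop :=
  (forall (a : R) (x y : X), phi (a *: x + y) = a * phi x + phi y) /\ continuous phi.

Definition dual_norm (phi : X -> R) : R :=
  sup [set `|phi x| | x in [set x : X | `|x| <= 1]].

(* Elements of X^** are modelled as functions h : (X -> R) -> R that are
   linear and bounded on X^* and vanish outside X^* (canonical representatives,
   so that equality in X^** is equality of functions). *)
Definition is_bidual (h : (X -> R) -> R) : Prop :=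
  [/\ (forall (a : R) (phi psi : X -> R), is_dual phi -> is_dual psi ->
         h (fun x => a * phi x + psi x) = a * h phi + h psi),
      (exists C : R, forall phi, is_dual phi -> `|h phi| <= C * dual_norm phi) &
      (forall phi, ~ is_dual phi -> h phi = 0)].

Definition bidual_norm (h : (X -> R) -> R) : R :=
  sup [set `|h phi| | phi in [set phi | is_dual phi /\ dual_norm phi <= 1]].

Definition canon (x : X) : (X -> R) -> R :=
  fun phi => if asbool (is_dual phi) then phi x else 0.

(* weak^* continuity of an element of X^** (characterization given in the paper) *)
Definition weakstar_cont (h : (X -> R) -> R) : Prop :=
  exists x : X, h = canon x.

Definition bidual_subspace (Y : set ((X -> R) -> R)) : Prop :=
  [/\ Y `<=` is_bidual, Y (fun _ => 0) &
      forall (a : R) g1 g2, Y g1 -> Y g2 -> Y (fun phi => a * g1 phi + g2 phi)].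

Definition kerb (h : (X -> R) -> R) : set (X -> R) :=
  [set phi | is_dual phi /\ h phi = 0].

Definition Mset (h : (X -> R) -> R) : set (X -> R) :=
  [set phi | [/\ is_dual phi, dual_norm phi = 1 & `|h phi| = bidual_norm h]].

Definition bsub (f g : (X -> R) -> R) : (X -> R) -> R := fun phi => f phi - g phi.

Definition best_approx (f : (X -> R) -> R) (Y : set ((X -> R) -> R))
    (g0 : (X -> R) -> R) : Prop :=
  Y g0 /\ bidual_norm (bsub f g0) = inf [set bidual_norm (bsub f g) | g in Y].

Definition bspan (n : nat) (gs : 'I_n -> (X -> R) -> R) : set ((X -> R) -> R) :=
  [set h | exists c : 'I_n -> R, h = fun phi => \sum_(i < n) c i * gs i phi].

End Bidual.

From Pilot Require Import Defs.
From HB Require Import structures.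
From mathcomp Require Import all_boot all_order all_algebra.
From mathcomp Require Import all_classical all_reals all_analysis.
From mathcomp Require Import ring lra.
Import Order.TTheory GRing.Theory Num.Theory.
Import numFieldNormedType.Exports.
Local Open Scope classical_set_scope.
Local Open Scope ring_scope.

Set Implicit Arguments. Unset Strict Implicit. Unset Printing Implicit Defensive.

(** [f = psi x] and every element of [Y] lie in the image of the canonical
embedding [psi], which is an isometry by Hahn-Banach, so the question is one of
best approximation of [x] by subspaces of [X].  If [g0 = psi x0] is a best
approximation and [W] is spanned by preimages of finitely many elements of [Y],
then [dist(x, W) = |x - x0|], and Hahn-Banach gives a norm-one functional
vanishing on [W] and taking the value [|x - x0|] at [x]: it lies in [N(g)] for
every [g] in [psi W], and in [M_(f - g0)].  Conversely, for [g = psi y] in [Y],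
a functional [F] in [N(g0) \cap N(g) \cap M_(f - g0)] gives
[||f - g0|| = |F x| = |F (x - y)| <= |x - y| = ||f - g||]. *)

Section DualSpace.
Variables (R : realType) (X : normedModType R).
Implicit Types (phi : X -> R) (f g h : (X -> R) -> R) (Y : set ((X -> R) -> R)).

Lemma sup_ge0 (S : set R) : S !=set0 -> (forall r, S r -> 0 <= r) -> 0 <= sup S.
Proof.
move=> [s Ss] S_ge0; have [ubS|] := pselect (has_ubound S).
  exact: le_trans (S_ge0 s Ss) (ub_le_sup ubS Ss).
by move=> nubS; rewrite sup_out // => -[].
Qed.

Definition linear_form phi :=
  forall (a : R) (x y : X), phi (a *: x + y) = a * phi x + phi y.

Lemma linear_form0 phi : linear_form phi -> phi 0 = 0.
Proof. by move=> L; have := L 1 0 0; rewrite scaler0 addr0 mul1r; lra. Qed.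

Lemma linear_formD phi : linear_form phi -> forall x y, phi (x + y) = phi x + phi y.
Proof. by move=> L x y; rewrite -[x in LHS]scale1r L mul1r. Qed.

Lemma linear_formZ phi : linear_form phi -> forall a x, phi (a *: x) = a * phi x.
Proof. by move=> L a x; rewrite -[_ *: x]addr0 L linear_form0 // addr0. Qed.

Lemma linear_formB phi : linear_form phi -> forall x y, phi (x - y) = phi x - phi y.
Proof. by move=> L x y; rewrite linear_formD // -scaleN1r linear_formZ //; lra. Qed.

Lemma bounded_linear_form_dual phi k : 0 <= k -> linear_form phi ->
  (forall x, `|phi x| <= k * `|x|) -> is_dual phi.
Proof.
move=> k_ge0 L bnd; split=> // x; apply/cvgrPdist_lt => e e_gt0; apply/nbhs_normP.
exists (e / (k + 1)); first by apply: divr_gt0 => //; lra.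
move=> y /= xy; rewrite -linear_formB //; apply: le_lt_trans (bnd _) _.
have : k * `|x - y| <= k * (e / (k + 1)) by rewrite ler_wpM2l // ltW.
have : k * (e / (k + 1)) < e.
  by rewrite mulrA ltr_pdivrMr ?[e * _]mulrC ?ltr_pM2r //; lra.
lra.
Qed.

Lemma dual_bounded phi : is_dual phi ->
  exists2 k, 0 <= k & forall x, `|phi x| <= k * `|x|.
Proof.
move=> [L /(_ 0)/cvgrPdist_lt/(_ 1 ltr01)/nbhs_norm0P[d /= d_gt0 near0]].
exists (2 / d) => [|x]; first by rewrite divr_ge0 // ltW.
have [->|x_neq0] := eqVneq x 0; first by rewrite linear_form0 // !normr0 mulr0.
have x_gt0 : 0 < `|x| by rewrite normr_gt0.
pose t := d / (2 * `|x|).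
have t_gt0 : 0 < t by rewrite divr_gt0 // mulr_gt0.
have : `|phi 0 - phi (t *: x)| < 1.
  apply: near0; rewrite /= normrZ gtr0_norm // /t.
  have -> : d / (2 * `|x|) * `|x| = d / 2 by field; rewrite gt_eqF.
  lra.
rewrite linear_form0 // sub0r normrN linear_formZ // normrM gtr0_norm // => tx_lt1.
have -> : 2 / d * `|x| = t^-1 by rewrite /t invf_div; field; rewrite gt_eqF.
by apply: ltW; rewrite -(ltr_pM2l t_gt0) divff // gt_eqF.
Qed.

Lemma has_sup_dual_norm phi : is_dual phi ->
  has_sup [set `|phi x| | x in [set x : X | `|x| <= 1]].
Proof.
move=> D; have [k k_ge0 bnd] := dual_bounded D; split.
  by exists `|phi 0|, 0 => //=; rewrite normr0 ler01.
exists k => _ [x /= x_le1 <-]; apply: le_trans (bnd x) _.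
by rewrite -[leRHS]mulr1 ler_wpM2l.
Qed.

Lemma dual_norm_ub phi x : is_dual phi -> `|phi x| <= dual_norm phi * `|x|.
Proof.
move=> D; have [_ ub] := has_sup_dual_norm D; have L : linear_form phi by case: D.
have [->|x_neq0] := eqVneq x 0; first by rewrite linear_form0 // !normr0 mulr0.
have x_gt0 : 0 < `|x| by rewrite normr_gt0.
have : `|phi (`|x|^-1 *: x)| <= dual_norm phi.
  apply: ub_le_sup ub _ _; exists (`|x|^-1 *: x) => //=.
  by rewrite normrZ normfV normr_id mulVf // gt_eqF.
rewrite linear_formZ // normrM normfV normr_id mulrC.
by rewrite -ler_pdivlMr ?invr_gt0 // invrK.
Qed.

Lemma dual_norm_le1 phi : (forall x, `|phi x| <= `|x|) -> dual_norm phi <= 1.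
Proof.
move=> bnd; apply: ge_sup; first by exists `|phi 0|, 0 => //=; rewrite normr0 ler01.
by move=> _ [x /= x_le1 <-]; apply: le_trans (bnd x) x_le1.
Qed.

Lemma is_dual0 : is_dual (fun _ : X => 0 : R).
Proof.
apply: (@bounded_linear_form_dual _ 0) => // [a x y|x]; first by rewrite mulr0 addr0.
by rewrite normr0 mul0r.
Qed.

Lemma bidual_norm_set_nonempty h :
  [set `|h phi| | phi in [set phi | is_dual phi /\ dual_norm phi <= 1]] !=set0.
Proof.
exists `|h (fun _ => 0)|, (fun _ => 0) => //; split; first exact: is_dual0.
by apply: dual_norm_le1 => x; rewrite normr0.
Qed.

Lemma bidual_norm_ge0 h : 0 <= bidual_norm h.
Proof. by apply: sup_ge0 (bidual_norm_set_nonempty h) _ => _ [phi _ <-]. Qed.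

Section BidualNormBound.
Variables (h : (X -> R) -> R) (B : R).
Hypothesis h_le : forall phi, is_dual phi -> dual_norm phi <= 1 -> `|h phi| <= B.

Lemma le_bidual_norm phi :
  is_dual phi -> dual_norm phi <= 1 -> `|h phi| <= bidual_norm h.
Proof.
move=> D N; apply: ub_le_sup; last by exists phi.
by exists B => _ [psi [D' N'] <-]; apply: h_le.
Qed.

Lemma bidual_norm_le : bidual_norm h <= B.
Proof.
by apply: ge_sup (bidual_norm_set_nonempty h) _ => _ [psi [D N] <-]; apply: h_le.
Qed.

End BidualNormBound.

Lemma best_approxP f Y (g0 : (X -> R) -> R) : Y g0 ->
  best_approx f Y g0 <->
  forall g, Y g -> bidual_norm (bsub f g0) <= bidual_norm (bsub f g).
Proof.
move=> Yg0; have lb : has_lbound [set bidual_norm (bsub f g) | g in Y].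
  by exists 0 => _ [g _ <-]; exact: bidual_norm_ge0.
split=> [[_ ->] g Yg|g0_min]; first by apply: ge_inf lb _ _; exists g.
split=> //; apply/le_anti/andP; split; last by apply: ge_inf lb _ _; exists g0.
apply: lb_le_inf => [|_ [g Yg <-]]; last exact: g0_min.
by exists (bidual_norm (bsub f g0)), g0.
Qed.

End DualSpace.

Section HahnBanach.
Variables (R : realType) (X : normedModType R).
Implicit Types (G : set (X * R)) (W : set X).

Definition dominated_graph G :=
  (forall s p q, G p -> G q -> G (s *: p.1 + q.1, s * p.2 + q.2)) /\
  (forall p, G p -> `|p.2| <= `|p.1|).

Lemma dominated_graph_functional G x a b :
  dominated_graph G -> G (x, a) -> G (x, b) -> a = b.
Proof.
move=> [lin dom] Ga Gb; have /= := dom _ (lin (-1) _ _ Ga Gb).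
by rewrite scaleN1r addNr normr0 normr_le0 mulN1r addrC subr_eq0 => /eqP.
Qed.

Lemma dominated_graph_scale G p t :
  dominated_graph G -> G (0, 0) -> G p -> G (t *: p.1, t * p.2).
Proof. by move=> [lin _] G0 Gp; have /= := lin t _ _ Gp G0; rewrite !addr0. Qed.

Definition graph_extend G z c :=
  [set p | exists q t, G q /\ p = (q.1 + t *: z, q.2 + t * c)].

Lemma dominated_graph_extension_constant G z : dominated_graph G -> G (0, 0) ->
  exists c, forall q, G q -> `|q.2 + c| <= `|q.1 + z|.
Proof.
move=> [lin dom] G0.
have sep q r : G q -> G r -> - `|q.1 + z| - q.2 <= `|r.1 + z| - r.2.
  move=> Gq Gr; have /= := dom _ (lin (-1) _ _ Gq Gr).
  have -> : -1 *: q.1 + r.1 = (r.1 + z) - (q.1 + z).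
    by rewrite scaleN1r opprD addrACA subrr addr0 addrC.
  move=> /le_trans/(_ (ler_normB _ _)); rewrite mulN1r => /ler_normlP[]; lra.
pose S := [set - `|q.1 + z| - q.2 | q in G].
have ubS : has_ubound S.
  by exists (`|(0 : X) + z| - 0) => _ [q Gq <-]; apply: (sep q (0, 0)).
exists (sup S) => q Gq; apply/ler_normlP.
have : - `|q.1 + z| - q.2 <= sup S by apply: ub_le_sup ubS _ _; exists q.
have : sup S <= `|q.1 + z| - q.2.
  apply: ge_sup => [|_ [r Gr <-]]; last exact: sep.
  by exists (- `|(0 : X) + z| - 0), (0, 0).
split; lra.
Qed.

Lemma dominated_graph_extend G z c : dominated_graph G -> G (0, 0) ->
  (forall q, G q -> `|q.2 + c| <= `|q.1 + z|) -> dominated_graph (graph_extend G z c).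
Proof.
move=> domG G0 c_dom; have [lin dom] := domG; split.
  move=> s _ _ [q [t [Gq ->]]] [q' [t' [Gq' ->]]] /=.
  exists (s *: q.1 + q'.1, s * q.2 + q'.2), (s * t + t'); split; first exact: lin.
  congr (_, _) => /=; last by ring.
  by rewrite scalerDr scalerA scalerDl addrACA.
move=> _ [q [t [Gq ->]]] /=.
have [->|t_neq0] := eqVneq t 0; first by rewrite scale0r mul0r !addr0; exact: dom.
have -> : q.2 + t * c = t * (t^-1 * q.2 + c) by field.
have -> : q.1 + t *: z = t *: (t^-1 *: q.1 + z).
  by rewrite scalerDr scalerA divff // scale1r.
by rewrite normrM normrZ ler_wpM2l // (c_dom _ (dominated_graph_scale _ domG G0 Gq)).
Qed.

Lemma dominated_graph_bigcup (F : set (set (X * R))) :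
  total_on F subset -> F `<=` dominated_graph -> dominated_graph (\bigcup_(G in F) G).
Proof.
move=> tot domF; split; last by move=> p [G FG Gp]; exact: (domF G FG).2.
move=> s p q [G1 FG1 G1p] [G2 FG2 G2q].
have [G12|G21] := tot G1 G2 FG1 FG2.
  by exists G2 => //; apply: (domF G2 FG2).1 => //; exact: G12.
by exists G1 => //; apply: (domF G1 FG1).1 => //; exact: G21.
Qed.

Theorem hahn_banach G0 : dominated_graph G0 -> G0 (0, 0) ->
  exists F : X -> R, [/\ is_dual F, (forall x, `|F x| <= `|x|) &
    forall p, G0 p -> F p.1 = p.2].
Proof.
move=> domG0 G00.
(* [set0] is allowed so that the union of the empty chain is admissible. *)
pose P G := G = set0 \/ G0 `<=` G /\ dominated_graph G.
have [|A [[A0|[G0A domA]] maxA]] := @Zorn_bigcup _ P.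
- move=> F FP tot; have [->|/set0P[p [G FG Gp]]] := eqVneq (\bigcup_(G in F) G) set0.
    by left.
  have G0G : G0 `<=` G by case: (FP G FG) => [G_0|[]//]; move: Gp; rewrite G_0.
  right; split=> [p' /G0G Gp'|]; first by exists G.
  by apply: dominated_graph_bigcup tot _ => G' /FP[->|[]//]; split.
- exfalso; apply: (maxA G0); first by rewrite A0; split=> // /(_ _ G00).
  by right; split.
have total z : exists a, A (z, a).
  apply: contrapT => nz.
  have [c c_dom] := dominated_graph_extension_constant z domA (G0A _ G00).
  have AB : A `<=` graph_extend A z c.
    by move=> [x a] Ap; exists (x, a), 0; rewrite scale0r mul0r !addr0.
  apply: (maxA (graph_extend A z c)).
    split=> // /(_ (z, c)) BA; apply: nz; exists c; apply: BA.
    by exists (0, 0), 1; split; [exact: G0A | rewrite scale1r mul1r !add0r].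
  by right; split; [exact: subset_trans G0A AB |
    exact: dominated_graph_extend domA (G0A _ G00) c_dom].
have [F AF] := choice total.
have F_le x : `|F x| <= `|x| by exact: domA.2 (x, F x) (AF x).
exists F; split=> //; last first.
  by move=> [x a] /G0A Axa; exact: dominated_graph_functional domA (AF x) Axa.
apply: (@bounded_linear_form_dual _ _ F 1) => // [a x y|x]; last by rewrite mul1r.
exact: dominated_graph_functional domA (AF _) (domA.1 a _ _ (AF x) (AF y)).
Qed.

End HahnBanach.

Section Annihilator.
Variables (R : realType) (X : normedModType R).
Implicit Types (W : set X).

Definition linear_subspace W :=
  W 0 /\ forall (s : R) w1 w2, W w1 -> W w2 -> W (s *: w1 + w2).

Lemma annihilator W x d : linear_subspace W -> 0 <= d ->
  (forall w, W w -> d <= `|x - w|) ->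
  exists F : X -> R, [/\ is_dual F, (forall z, `|F z| <= `|z|), F x = d &
    forall w, W w -> F w = 0].
Proof.
move=> [W0 Wlin] d_ge0 d_le.
pose G := [set p | exists w t, W w /\ p = (w + t *: x, t * d)].
have [||F [DF F_le FG]] := @hahn_banach R X G.
- split.
    move=> s _ _ [w1 [t1 [W1 ->]]] [w2 [t2 [W2 ->]]] /=.
    exists (s *: w1 + w2), (s * t1 + t2); split; first exact: Wlin.
    by congr (_, _); [rewrite scalerDr scalerA scalerDl addrACA | ring].
  move=> _ [w [t [Ww ->]]] /=.
  have [->|t_neq0] := eqVneq t 0; first by rewrite mul0r normr0.
  have -> : w + t *: x = t *: (x - (- (t^-1 *: w))).
    by rewrite opprK scalerDr scalerA divff // scale1r addrC.
  rewrite normrM normrZ (ger0_norm d_ge0) ler_wpM2l // d_le //.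
  by have := Wlin (- t^-1) _ _ Ww W0; rewrite addr0 scaleNr.
- by exists 0, 0; rewrite scale0r mul0r addr0.
exists F; split=> // [|w Ww].
  by apply: (FG (x, d)); exists 0, 1; rewrite add0r scale1r mul1r.
by apply: (FG (w, 0)); exists w, 0; rewrite scale0r addr0 mul0r.
Qed.

Lemma norming_functional v : exists psi : X -> R,
  [/\ is_dual psi, (forall z, `|psi z| <= `|z|) & psi v = `|v|].
Proof.
have [|||psi [D psi_le psiv _]] := @annihilator [set 0] v `|v|.
- by split=> // s _ _ -> ->; rewrite scaler0 addr0.
- exact: normr_ge0.
- by move=> _ ->; rewrite subr0.
by exists psi.
Qed.

Lemma norming_dual_norm (phi : X -> R) (v : X) : is_dual phi ->
  (forall z, `|phi z| <= `|z|) -> v != 0 -> phi v = `|v| -> dual_norm phi = 1.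
Proof.
move=> D phi_le v_neq0 phiv; apply/le_anti; rewrite dual_norm_le1 //=.
have := dual_norm_ub v D; rewrite phiv normr_id -[X in X <= _]mul1r.
by rewrite ler_pM2r ?normr_gt0.
Qed.

Lemma best_approx_annihilator W x x0 : linear_subspace W -> W x0 -> ~ W x ->
  (forall w, W w -> `|x - x0| <= `|x - w|) ->
  exists F : X -> R, [/\ is_dual F, dual_norm F = 1, F x = `|x - x0| &
    forall w, W w -> F w = 0].
Proof.
move=> Wsub Wx0 Wx x0_best.
have [F [DF F_le Fx FW]] := annihilator Wsub (normr_ge0 _) x0_best.
exists F; split=> //; apply: (@norming_dual_norm _ (x - x0)) => //.
  by rewrite subr_eq0; apply: contraPneq Wx => ->.
by rewrite (linear_formB (proj1 DF)) Fx FW // subr0.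
Qed.

End Annihilator.

Section CanonicalEmbedding.
Variables (R : realType) (X : normedModType R).
Implicit Types (phi : X -> R) (x y : X).

Lemma canonE x phi : is_dual phi -> Defs.canon x phi = phi x.
Proof. by move=> D; rewrite /Defs.canon asboolT. Qed.

Lemma canon_notdual x phi : ~ is_dual phi -> Defs.canon x phi = 0.
Proof. by move=> D; rewrite /Defs.canon asboolF. Qed.

Lemma bsub_canonE x y phi :
  is_dual phi -> bsub (Defs.canon x) (Defs.canon y) phi = phi (x - y).
Proof. by move=> D; rewrite /bsub !canonE // (linear_formB (proj1 D)). Qed.

Lemma bidual_norm_canonB x y :
  bidual_norm (bsub (Defs.canon x) (Defs.canon y)) = `|x - y|.
Proof.
have canon_le phi : is_dual phi -> dual_norm phi <= 1 ->
    `|bsub (Defs.canon x) (Defs.canon y) phi| <= `|x - y|.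
  move=> D N; rewrite bsub_canonE //.
  by apply: le_trans (dual_norm_ub _ D) _; rewrite ler_piMl.
apply/le_anti; rewrite bidual_norm_le //=.
have [psi [D psi_le psiE]] := norming_functional (x - y).
have := le_bidual_norm canon_le D (dual_norm_le1 psi_le).
by rewrite bsub_canonE // psiE normr_id.
Qed.

Lemma canon_inj : injective (@Defs.canon R X).
Proof.
move=> x y xy; apply/eqP; rewrite -subr_eq0 -normr_eq0.
by rewrite -bidual_norm_canonB xy bidual_norm_canonB subrr normr0.
Qed.

Definition vspan n (y : 'I_n -> X) : set X :=
  [set x | exists e : 'I_n -> R, x = \sum_(i < n) e i *: y i].

Lemma vspan_subspace n (y : 'I_n -> X) : linear_subspace (vspan y).
Proof.
split; first by exists (fun=> 0); rewrite big1 // => i _; rewrite scale0r.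
move=> s _ _ [e1 ->] [e2 ->]; exists (fun i => s * e1 i + e2 i).
by rewrite scaler_sumr -big_split; apply: eq_bigr => i _; rewrite scalerDl scalerA.
Qed.

Lemma vspan_mem n (y : 'I_n -> X) i : vspan y (y i).
Proof.
exists (fun j => (j == i)%:R); rewrite (bigD1 i) //= eqxx scale1r big1 ?addr0 //.
by move=> j /negbTE ->; rewrite scale0r.
Qed.

Lemma canon_sum n (y : 'I_n -> X) (e : 'I_n -> R) :
  (fun phi => \sum_(i < n) e i * Defs.canon (y i) phi) =
  Defs.canon (\sum_(i < n) e i *: y i).
Proof.
apply: funext => phi; have [D|D] := pselect (is_dual phi); last first.
  by rewrite canon_notdual // big1 // => i _; rewrite canon_notdual // mulr0.
rewrite canonE //; under eq_bigr do rewrite canonE //.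
have L : linear_form phi by case: D.
apply: (big_rec2 (fun a b => a = phi b)); first by rewrite linear_form0.
by move=> i a b _ ->; rewrite L.
Qed.

Lemma bspan_canon n (y : 'I_n -> X) :
  bspan (fun i => Defs.canon (y i)) = [set Defs.canon x | x in vspan y].
Proof.
apply/seteqP; split=> [_ [e ->]|_ [_ [e ->] <-]]; last by exists e; rewrite canon_sum.
by exists (\sum_(i < n) e i *: y i); [exists e | rewrite canon_sum].
Qed.

Lemma bspan_sub (Y : set ((X -> R) -> R)) n (gs : 'I_n -> (X -> R) -> R) :
  bidual_subspace Y -> (forall i, Y (gs i)) -> bspan gs `<=` Y.
Proof.
move=> [_ Y0 Ylin] Ygs _ [e ->].
elim: (index_enum _) => [|i s IH]; first by under eq_fun do rewrite big_nil.
by under eq_fun do rewrite big_cons; apply: Ylin.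
Qed.

End CanonicalEmbedding.

Unset Implicit Arguments.

Theorem theorem4p1 (R : realType) (X : completeNormedModType R)
  (f : (X -> R) -> R) (Y : set ((X -> R) -> R)) (g0 : (X -> R) -> R) :
  weakstar_cont f ->
  bidual_subspace Y ->
  (forall g, Y g -> weakstar_cont g) ->
  ~ Y f ->
  Y g0 ->
  (best_approx f Y g0 <->
   (forall (n : nat) (gs : 'I_n -> (X -> R) -> R),
      (forall i, Y (gs i)) -> bspan gs g0 ->
      (\bigcap_(g in bspan gs) kerb g) `&` Mset (bsub f g0) !=set0)).
Proof.
move=> [x ->] Ysub Ywc Yf Yg0; have [x0 g0E] := Ywc _ Yg0; subst g0.
rewrite best_approxP //; split=> [x0_best n gs Ygs|annihilators].
- have [y gsE] := choice (fun i => Ywc _ (Ygs i)).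
  have -> : gs = fun i => Defs.canon (y i) by apply: funext.
  have Y_vspan : [set Defs.canon w | w in vspan y] `<=` Y.
    by rewrite -bspan_canon; apply: bspan_sub => // i; rewrite -gsE.
  rewrite bspan_canon => -[x1 + /canon_inj x1E]; rewrite x1E => Wx0.
  have Wx : ~ vspan y x by move=> Wx; apply: Yf; apply: Y_vspan; exists x.
  have [|F [DF NF Fx FW]] := best_approx_annihilator (vspan_subspace y) Wx0 Wx.
    move=> w Ww; rewrite -!bidual_norm_canonB.
    by apply: x0_best; apply: Y_vspan; exists w.
  exists F; split; first by move=> _ [w Ww <-]; split; rewrite ?canonE ?FW.
  split=> //; rewrite bsub_canonE // (linear_formB (proj1 DF)) Fx FW // subr0.
  by rewrite normr_id bidual_norm_canonB.
- move=> g Yg; have [y gE] := Ywc g Yg; subst g.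
  pose y2 (i : 'I_2) := if val i == 0%N then x0 else y.
  have [||F [FZ [DF NF MF]]] := annihilators 2 (fun i => Defs.canon (y2 i)).
  + by move=> i; rewrite /y2; case: ifP.
  + by rewrite bspan_canon; exists x0 => //; exact: (vspan_mem y2 ord0).
  have F_y2 i : F (y2 i) = 0.
    rewrite bspan_canon in FZ.
    by have [_] := FZ _ (ex_intro2 _ _ _ (vspan_mem y2 i) erefl); rewrite canonE.
  have FxE : F (x - x0) = F (x - y).
    have [Fx0 Fy] : F x0 = 0 /\ F y = 0 := conj (F_y2 ord0) (F_y2 ord_max).
    by rewrite !(linear_formB (proj1 DF)) Fx0 Fy.
  rewrite -MF bsub_canonE // FxE bidual_norm_canonB.
  by apply: le_trans (dual_norm_ub _ DF) _; rewrite NF mul1r.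
Qed.
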